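(* For every fixed integer $k\ge1$, the function $M\mapsto \mathrm{opt}_{\mathrm{bs}}(k,M)$ is superadditive: for all positive integers $M_1,M_2$, \[\mathrm{opt}_{\mathrm{bs}}(k,M_1+M_2)\ge \mathrm{opt}_{\mathrm{bs}}(k,M_1)+\mathrm{opt}_{\mathrm{bs}}(k,M_2).\]
   Context: Let $F$ be a family of functions from a set $X$ to a set $Y$. Online learning of $F$ is a game between a learner and an adversary: the adversary secretly fixes some $f\in F$ and presents inputs $x_1,x_2,\dots\in X$ one at a time, chosen adaptively; after each input $x_t$ the learner guesses a value for $f(x_t)$. A mistake is an incorrect guess. In the standard model, after each guess the adversary reveals the true value $f(x_t)$; in the bandit model, the adversary only says YES (guess correct) or NO (guess incorrect). $\mathrm{opt}_{\mathrm{std}}(F)$ (resp. $\mathrm{opt}_{\mathrm{bs}}(F)$) is the maximum number of mistakes the learner makes in the standard (resp. bandit) model when both learner and adversary play optimally (the learner minimizing, the adversary maximizing, the adversary's answers required to be consistent with some $f\in F$). For positive integers $k,M$, $\mathrm{opt}_{\mathrm{bs}}(k,M)$ denotes the maximum of $\mathrm{opt}_{\mathrm{bs}}(F)$ over all families $F$ of functions (with arbitrary domain) with codomain $\{0,1,\dots,k-1\}$ and $\mathrm{opt}_{\mathrm{std}}(F)=M$. *)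

(* Online learning (mistake-bound model), standard and bandit
   feedback, for families of functions X -> 'I_k (codomain {0,...,k-1}). *)
From mathcomp Require Import all_boot.
Set Implicit Arguments. Unset Strict Implicit. Unset Printing Implicit Defensive.

Definition family (X : Type) (k : nat) := (X -> 'I_k) -> Prop.

Definition std_learner (X : Type) (k : nat) := seq (X * 'I_k) -> X -> 'I_k.

Definition std_hist X k (f : X -> 'I_k) (xs : nat -> X) (t : nat) : seq (X * 'I_k) :=
  [seq (xs s, f (xs s)) | s <- iota 0 t].

Definition std_mistakes X k (L : std_learner X k) (f : X -> 'I_k) (xs : nat -> X)
  (n : nat) : nat :=
  \sum_(t < n) (L (std_hist f xs t) (xs t) != f (xs t)).

(* L makes at most m mistakes against every target in F and every
   (adaptively chosen; for a deterministic learner, equivalently every)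
   input sequence. *)
Definition std_guarantee X k (F : family X k) (L : std_learner X k) (m : nat) : Prop :=
  forall f, F f -> forall (xs : nat -> X) (n : nat), std_mistakes L f xs n <= m.

Definition opt_std_is X k (F : family X k) (M : nat) : Prop :=
  (exists L, std_guarantee F L M) /\
  (forall L m, std_guarantee F L m -> M <= m).

Definition bs_learner (X : Type) (k : nat) := seq (X * 'I_k * bool) -> X -> 'I_k.

Fixpoint bs_hist X k (L : bs_learner X k) (f : X -> 'I_k) (xs : nat -> X) (t : nat)
  : seq (X * 'I_k * bool) :=
  match t with
  | 0 => [::]
  | t'.+1 =>
      let h := bs_hist L f xs t' in
      let g := L h (xs t') in
      rcons h (xs t', g, g == f (xs t'))
  end.

Definition bs_mistakes X k (L : bs_learner X k) (f : X -> 'I_k) (xs : nat -> X)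
  (n : nat) : nat :=
  \sum_(t < n) (L (bs_hist L f xs t) (xs t) != f (xs t)).

Definition bs_guarantee X k (F : family X k) (L : bs_learner X k) (m : nat) : Prop :=
  forall f, F f -> forall (xs : nat -> X) (n : nat), bs_mistakes L f xs n <= m.

Definition opt_bs_is X k (F : family X k) (M : nat) : Prop :=
  (exists L, bs_guarantee F L M) /\
  (forall L m, bs_guarantee F L m -> M <= m).

Definition opt_bs_kM_is (k M v : nat) : Prop :=
  (exists (X : Type) (F : family X k), opt_std_is F M /\ opt_bs_is F v) /\
  (forall (X : Type) (F : family X k) (v' : nat),
      opt_std_is F M -> opt_bs_is F v' -> v' <= v).

(* Put F1 on X1 and F2 on X2 side by side: the family on X1 + X2 of all
   functions whose restrictions lie in F1 and F2.  In both feedback models its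
   optimal mistake bound is the sum of the two bounds: a learner can run
   optimal learners for F1 and F2 independently on the two halves of the
   domain, and an adversary can first play an optimal strategy against the
   learner restricted to X1, then another one against its restriction to X2.
   Applied to families realising opt_bs(k, M1) and opt_bs(k, M2), this gives a
   family with opt_std = M1 + M2 and opt_bs = opt_bs(k, M1) + opt_bs(k, M2). *)
From Pilot Require Import Defs.
From Stdlib Require Import Classical.
From mathcomp Require Import all_boot.
Set Implicit Arguments. Unset Strict Implicit. Unset Printing Implicit Defensive.

Definition optimal_bound (A : Type) (G : A -> nat -> Prop) (M : nat) : Prop :=
  (exists a, G a M) /\ (forall a m, G a m -> M <= m).

Lemma optimal_bound_ext (A : Type) (G G' : A -> nat -> Prop) M :
  (forall a m, G a m <-> G' a m) -> optimal_bound G M <-> optimal_bound G' M.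
Proof.
move=> GG'; split=> -[[a Ga] Gmin]; split.
- by exists a; apply/GG'.
- by move=> b m /GG'; apply: Gmin.
- by exists a; apply/GG'.
- by move=> b m /GG'; apply: Gmin.
Qed.

Section Protocol.

(* A feedback model is given by the record [fb x g y] that the learner appends
   to its history after guessing [g] on input [x] whose true value is [y]. *)
Variables (X R : Type) (k : nat) (fb : X -> 'I_k -> 'I_k -> R).

Fixpoint mistakes (L : seq R -> X -> 'I_k) (f : X -> 'I_k) (h : seq R)
    (s : seq X) : nat :=
  if s is x :: s' then (L h x != f x) + mistakes L f (rcons h (fb x (L h x) (f x))) s'
  else 0.

Fixpoint history (L : seq R -> X -> 'I_k) (f : X -> 'I_k) (h : seq R)
    (s : seq X) : seq R :=
  if s is x :: s' then history L f (rcons h (fb x (L h x) (f x))) s' else h.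

Lemma mistakes_cat L f h s t :
  mistakes L f h (s ++ t) = mistakes L f h s + mistakes L f (history L f h s) t.
Proof. by elim: s h => [|x s IHs] h //=; rewrite IHs addnA. Qed.

Lemma mistakes_iota (hist : nat -> seq R) L f (xs : nat -> X) n :
    (forall t, hist t.+1 = rcons (hist t) (fb (xs t) (L (hist t) (xs t)) (f (xs t)))) ->
  \sum_(t < n) (L (hist t) (xs t) != f (xs t)) =
    mistakes L f (hist 0) (map xs (iota 0 n)).
Proof.
move=> hist_succ.
rewrite -(big_mkord xpredT (fun t => (L (hist t) (xs t) != f (xs t)) : nat)).
suff from_t t : \sum_(t <= i < t + n) (L (hist i) (xs i) != f (xs i)) =
    mistakes L f (hist t) (map xs (iota t n)) by exact: from_t 0.
elim: n t => [|n IHn] t; first by rewrite addn0 big_geq.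
rewrite big_ltn; last by rewrite addnS ltnS leq_addr.
by rewrite -addSnnS IHn /= -hist_succ.
Qed.

Definition guarantee (F : Defs.family X k) (L : seq R -> X -> 'I_k) (m : nat) : Prop :=
  forall f, F f -> forall s, mistakes L f [::] s <= m.

Definition opt_is (F : Defs.family X k) (M : nat) : Prop := optimal_bound (guarantee F) M.

Lemma guarantee_iotaP F L m :
  guarantee F L m <->
  (forall f, F f -> forall xs n, mistakes L f [::] (map xs (iota 0 n)) <= m).
Proof.
split=> [G f Ff xs n | G f Ff [|x0 s] //]; first exact: G.
by have := G f Ff (nth x0 (x0 :: s)) (size (x0 :: s)); rewrite -/(mkseq _ _) mkseq_nth.
Qed.

Lemma opt_is_nonempty F M : opt_is F M -> 0 < M -> exists f, F f.
Proof.
move=> [[L _] Mmin] M_gt0; apply: NNPP => F_empty.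
have G0 : guarantee F L 0 by move=> f Ff; case: F_empty; exists f.
by move: (Mmin _ _ G0); rewrite leqn0 => /eqP M0; rewrite M0 in M_gt0.
Qed.

Lemma opt_is_forced F M : opt_is F M -> (exists f, F f) ->
  forall L, exists2 f, F f & exists s, M <= mistakes L f [::] s.
Proof.
move=> [_ Mmin] [f0 Ff0] L; case: M Mmin => [|M] Mmin.
  by exists f0 => //; exists [::].
apply: NNPP => not_forced.
(* Otherwise [L] would make at most [M] mistakes, beating the bound [M.+1]. *)
suff /Mmin : guarantee F L M by rewrite ltnn.
move=> f Ff s; rewrite leqNgt; apply/negP => M_lt.
by apply: not_forced; exists f => //; exists s.
Qed.

End Protocol.

Section Relabel.

Variables (X X' R R' : Type) (k : nat).
Variables (fb : X -> 'I_k -> 'I_k -> R) (fb' : X' -> 'I_k -> 'I_k -> R').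
Variables (j : X' -> X) (e : R' -> R).
Hypothesis e_fb : forall x g y, e (fb' x g y) = fb (j x) g y.

Definition restrict_learner (H : seq R) (L : seq R -> X -> 'I_k) : seq R' -> X' -> 'I_k :=
  fun h x => L (H ++ map e h) (j x).

Lemma history_map L f H h s :
  history fb L f (H ++ map e h) (map j s) =
  H ++ map e (history fb' (restrict_learner H L) (f \o j) h s).
Proof.
by elim: s h => [|x s IHs] h //=; rewrite -IHs map_rcons rcons_cat e_fb.
Qed.

Lemma mistakes_map L f H h s :
  mistakes fb L f (H ++ map e h) (map j s) =
  mistakes fb' (restrict_learner H L) (f \o j) h s.
Proof.
by elim: s h => [|x s IHs] h //=; rewrite -IHs map_rcons rcons_cat e_fb.
Qed.

End Relabel.

Definition lefts (A B : Type) (s : seq (A + B)) : seq A :=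
  pmap (fun z => if z is inl a then Some a else None) s.

Definition rights (A B : Type) (s : seq (A + B)) : seq B :=
  pmap (fun z => if z is inr b then Some b else None) s.

Definition family_sum (X1 X2 : Type) (k : nat)
    (F1 : Defs.family X1 k) (F2 : Defs.family X2 k) : Defs.family (X1 + X2) k :=
  fun f => F1 (f \o inl) /\ F2 (f \o inr).

Section DisjointSum.

Variables (X1 X2 R R1 R2 : Type) (k : nat).
Variables (fb : X1 + X2 -> 'I_k -> 'I_k -> R).
Variables (fb1 : X1 -> 'I_k -> 'I_k -> R1) (fb2 : X2 -> 'I_k -> 'I_k -> R2).
Variables (side : R -> R1 + R2) (e1 : R1 -> R) (e2 : R2 -> R).
Hypothesis side_inl : forall x g y, side (fb (inl x) g y) = inl (fb1 x g y).
Hypothesis side_inr : forall x g y, side (fb (inr x) g y) = inr (fb2 x g y).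
Hypothesis e1_fb : forall x g y, e1 (fb1 x g y) = fb (inl x) g y.
Hypothesis e2_fb : forall x g y, e2 (fb2 x g y) = fb (inr x) g y.

Definition learner_sum (L1 : seq R1 -> X1 -> 'I_k) (L2 : seq R2 -> X2 -> 'I_k) :
    seq R -> X1 + X2 -> 'I_k :=
  fun h z => match z with
             | inl x => L1 (lefts (map side h)) x
             | inr x => L2 (rights (map side h)) x
             end.

Lemma mistakes_sum L1 L2 f h s :
  mistakes fb (learner_sum L1 L2) f h s =
  mistakes fb1 L1 (f \o inl) (lefts (map side h)) (lefts s) +
  mistakes fb2 L2 (f \o inr) (rights (map side h)) (rights s).
Proof.
elim: s h => [|[x|x] s IHs] h //=;
  rewrite IHs map_rcons /lefts /rights -!cats1 !pmap_cat ?side_inl ?side_inr /=.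
- by rewrite cats0 addnA.
- by rewrite cats0 addnCA.
Qed.

Lemma guarantee_sum F1 F2 L1 L2 m1 m2 :
  guarantee fb1 F1 L1 m1 -> guarantee fb2 F2 L2 m2 ->
  guarantee fb (family_sum F1 F2) (learner_sum L1 L2) (m1 + m2).
Proof.
move=> G1 G2 f [F1f F2f] s; rewrite mistakes_sum.
by apply: leq_add; [apply: G1 | apply: G2].
Qed.

Lemma forced_sum F1 F2 M1 M2 :
  opt_is fb1 F1 M1 -> opt_is fb2 F2 M2 -> (exists f, F1 f) -> (exists f, F2 f) ->
  forall L, exists2 f, family_sum F1 F2 f &
    exists s, M1 + M2 <= mistakes fb L f [::] s.
Proof.
move=> opt1 opt2 ne1 ne2 L.
have [f1 F1f1 [s1 forced1]] := opt_is_forced opt1 ne1 (restrict_learner inl e1 [::] L).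
pose H := map e1 (history fb1 (restrict_learner inl e1 [::] L) f1 [::] s1).
have [f2 F2f2 [s2 forced2]] := opt_is_forced opt2 ne2 (restrict_learner inr e2 H L).
pose f z := match z with inl x => f1 x | inr x => f2 x end.
exists f; first by split.
exists (map inl s1 ++ map inr s2); rewrite mistakes_cat.
rewrite (mistakes_map e1_fb L f [::] [::]) (history_map e1_fb L f [::] [::]) /=.
have := mistakes_map e2_fb L f H [::] s2; rewrite cats0 => ->.
exact: leq_add forced1 forced2.
Qed.

Lemma opt_is_sum F1 F2 M1 M2 :
  opt_is fb1 F1 M1 -> opt_is fb2 F2 M2 -> (exists f, F1 f) -> (exists f, F2 f) ->
  opt_is fb (family_sum F1 F2) (M1 + M2).
Proof.
move=> opt1 opt2 ne1 ne2; split.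
  have [[L1 G1] _] := opt1; have [[L2 G2] _] := opt2.
  by exists (learner_sum L1 L2); apply: guarantee_sum.
move=> L m G; have [f Ff [s forced]] := forced_sum opt1 opt2 ne1 ne2 L.
exact: leq_trans forced (G f Ff s).
Qed.

End DisjointSum.

Definition std_feedback (X : Type) (k : nat) (x : X) (g y : 'I_k) : X * 'I_k := (x, y).

Definition bs_feedback (X : Type) (k : nat) (x : X) (g y : 'I_k) : X * 'I_k * bool :=
  (x, g, g == y).

Lemma std_mistakesE X k (L : std_learner X k) f xs n :
  std_mistakes L f xs n = mistakes (@std_feedback X k) L f [::] (map xs (iota 0 n)).
Proof.
apply: (mistakes_iota (hist := std_hist f xs)) => t.
by rewrite /std_hist -addn1 iotaD map_cat cats1.
Qed.

Lemma bs_mistakesE X k (L : bs_learner X k) f xs n :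
  bs_mistakes L f xs n = mistakes (@bs_feedback X k) L f [::] (map xs (iota 0 n)).
Proof. exact: (mistakes_iota (hist := bs_hist L f xs)). Qed.

Lemma opt_std_isE X k (F : Defs.family X k) M :
  opt_std_is F M <-> opt_is (@std_feedback X k) F M.
Proof.
apply: optimal_bound_ext => L m; rewrite guarantee_iotaP.
by split=> G f Ff xs n; move: (G f Ff xs n); rewrite std_mistakesE.
Qed.

Lemma opt_bs_isE X k (F : Defs.family X k) M :
  opt_bs_is F M <-> opt_is (@bs_feedback X k) F M.
Proof.
apply: optimal_bound_ext => L m; rewrite guarantee_iotaP.
by split=> G f Ff xs n; move: (G f Ff xs n); rewrite bs_mistakesE.
Qed.

Definition std_side (X1 X2 : Type) (k : nat) (r : (X1 + X2) * 'I_k) :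
    (X1 * 'I_k) + (X2 * 'I_k) :=
  match r with (inl x, y) => inl (x, y) | (inr x, y) => inr (x, y) end.

Definition bs_side (X1 X2 : Type) (k : nat) (r : (X1 + X2) * 'I_k * bool) :
    (X1 * 'I_k * bool) + (X2 * 'I_k * bool) :=
  match r with (inl x, g, b) => inl (x, g, b) | (inr x, g, b) => inr (x, g, b) end.

Lemma opt_std_is_sum X1 X2 k (F1 : Defs.family X1 k) (F2 : Defs.family X2 k) M1 M2 :
  opt_std_is F1 M1 -> opt_std_is F2 M2 -> (exists f, F1 f) -> (exists f, F2 f) ->
  opt_std_is (family_sum F1 F2) (M1 + M2).
Proof.
rewrite !opt_std_isE; apply: (opt_is_sum (side := @std_side X1 X2 k)
  (e1 := fun '(x, y) => (inl x, y)) (e2 := fun '(x, y) => (inr x, y))) => //.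
Qed.

Lemma opt_bs_is_sum X1 X2 k (F1 : Defs.family X1 k) (F2 : Defs.family X2 k) v1 v2 :
  opt_bs_is F1 v1 -> opt_bs_is F2 v2 -> (exists f, F1 f) -> (exists f, F2 f) ->
  opt_bs_is (family_sum F1 F2) (v1 + v2).
Proof.
rewrite !opt_bs_isE; apply: (opt_is_sum (side := @bs_side X1 X2 k)
  (e1 := fun '(x, g, b) => (inl x, g, b)) (e2 := fun '(x, g, b) => (inr x, g, b))) => //.
Qed.

Theorem mainTheorem4 (k M1 M2 v1 v2 v : nat) :
  1 <= k -> 1 <= M1 -> 1 <= M2 ->
  opt_bs_kM_is k M1 v1 -> opt_bs_kM_is k M2 v2 -> opt_bs_kM_is k (M1 + M2) v ->
  v1 + v2 <= v.
Proof.
move=> _ M1_gt0 M2_gt0 [[X1 [F1 [std1 bs1]]] _] [[X2 [F2 [std2 bs2]]] _] [_ v_max].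
have ne1 := opt_is_nonempty (proj1 (opt_std_isE F1 M1) std1) M1_gt0.
have ne2 := opt_is_nonempty (proj1 (opt_std_isE F2 M2) std2) M2_gt0.
apply: (v_max _ (family_sum F1 F2)).
- exact: opt_std_is_sum.
- exact: opt_bs_is_sum.
Qed.
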